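(* Let $P$ and $Q$ be posets, let $\mathcal U$ and $\mathcal D$ be a join- and a meet-specification of $P$, both of radius $\omega$, let $n\in\omega$, and let $\mathcal A_n$, $\mathcal U_n$, $\mathcal D_n$, $\gamma_{0n}:P\to\mathcal A_n$ be as in the construction described in the context. Let $f:P\to Q$ be a $(\mathcal U,\mathcal D)$-morphism, and suppose $Q$ is $(n+1)$-complete relative to $f[P]$. Then there is a unique $(\mathcal U_n,\mathcal D_n)$-morphism $f^*:\mathcal A_n\to Q$ such that $f^*\circ\gamma_{0n}=f$.
   Context: For a poset $Q$ and $q\in Q$, $q^\uparrow=\{q'\ge q\}$, $q^\downarrow=\{q'\le q\}$; $e^{-1}(Z)=\{p:e(p)\in Z\}$. A meet-extension is an order-embedding $e:P\to X$ with $x=\bigwedge e[e^{-1}(x^\uparrow)]$ for all $x\in X$; a join-extension dually. Completely meet-preserving: preserves all meets that exist in the domain; completely join-preserving dually. Canonical amalgamation of a meet-extension $e_X:P\to X$ and a join-extension $e_Y:P\to Y$: a triple $(A,\pi_X,\pi_Y)$, $A$ a poset, $\pi_X:X\to A$ a completely meet-preserving order-embedding, $\pi_Y:Y\to A$ a completely join-preserving order-embedding, $\pi_X\circ e_X=\pi_Y\circ e_Y$, and for every poset $Q'$ and order-preserving $f:X\to Q'$, $g:Y\to Q'$ with ($\pi_Y(y)\le\pi_X(x)\Rightarrow g(y)\le f(x)$), there is a unique order-preserving $u:A\to Q'$ with $u\circ\pi_X=f$, $u\circ\pi_Y=g$. A join-specification of $P$ is a set $\mathcal U$ of subsets of $P$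 each having a join in $P$, containing all singletons; meet-specification dually; radius $\omega$ means all members are finite. For a set $\mathcal U$ of subsets of a poset with existing joins, a $\mathcal U$-ideal is a downset closed under joins of members of $\mathcal U$ contained in it; $\mathcal D$-filters dually; finitely generated means smallest such containing some finite set. An order-preserving map is a $(\mathcal U,\mathcal D)$-morphism if it preserves joins of members of $\mathcal U$ and meets of members of $\mathcal D$. Construction: $\mathcal A_0=P$, $\mathcal U_0=\mathcal U$, $\mathcal D_0=\mathcal D$. Given $\mathcal A_n,\mathcal U_n,\mathcal D_n$: $X_n$ = non-empty finitely generated $\mathcal D_n$-filters of $\mathcal A_n$ ordered by reverse inclusion, $Y_n$ = non-empty finitely generated $\mathcal U_n$-ideals of $\mathcal A_n$ ordered by inclusion, $e_{X_n}(a)=a^\uparrow$, $e_{Y_n}(a)=a^\downarrow$; $(\mathcal A_{n+1},\pi_{X_n},\pi_{Y_n})$ a canonical amalgamation of $e_{X_n},e_{Y_n}$; $\gamma_n=\pi_{X_n}\circ e_{X_n}$; $\mathcal U_{n+1}=\mathcal D_{n+1}$ = non-empty finite subsets of $\gamma_n[\mathcal A_n]$; $\gamma_{mn}=\gamma_{n-1}\circ\dots\circ\gamma_m$ for $m<n$, $\gamma_{nn}=\mathrm{id}$. Terms: for $2\le k<\omega$ take $k$-ary symbols $\bigvee_k,\bigwedge_k$. For a set $T$, $T$-terms are elements of $T$ (complexity 0) and $\bigvee_k(\phi_1,\dots,\phi_k)$, $\bigwedge_k(\phi_1,\dots,\phi_k)$ for $T$-terms $\phi_i$ (complexity $1+\max$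 of complexities). For $T\subseteq Q$, $q\in Q$ corresponds to $t\in T$ iff $q=t$; to $\bigvee_k(\phi_1,\dots,\phi_k)$ iff each $\phi_i$ has a correspondent $q_i$ and $q=\bigvee\{q_1,\dots,q_k\}$ in $Q$; dually for $\bigwedge_k$. $Q$ is $k$-complete relative to $T$ if for all $k'<k$ every $T$-term of complexity $k'$ has a correspondent in $Q$. *)

From Stdlib Require Import List PeanoNat ProofIrrelevance
  FunctionalExtensionality PropExtensionality.
Set Implicit Arguments.

Record Poset := {
  carrier :> Type;
  le : carrier -> carrier -> Prop;
  le_refl : forall x, le x x;
  le_antisym : forall x y, le x y -> le y x -> x = y;
  le_trans : forall x y z, le x y -> le y z -> le x z }.

Arguments le {_} _ _.

Definition subset {T : Type} (A B : T -> Prop) : Prop := forall x, A x -> B x.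

Definition image {A B : Type} (f : A -> B) (S : A -> Prop) : B -> Prop :=
  fun y => exists x, S x /\ f x = y.
Definition preimage {A B : Type} (f : A -> B) (Z : B -> Prop) : A -> Prop :=
  fun x => Z (f x).

Definition up {Q : Poset} (q : Q) : Q -> Prop := fun q' => le q q'.
Definition down {Q : Poset} (q : Q) : Q -> Prop := fun q' => le q' q.

Definition is_lb {Q : Poset} (S : Q -> Prop) (x : Q) := forall y, S y -> le x y.
Definition is_ub {Q : Poset} (S : Q -> Prop) (x : Q) := forall y, S y -> le y x.
Definition is_meet {Q : Poset} (S : Q -> Prop) (m : Q) :=
  is_lb S m /\ forall x, is_lb S x -> le x m.
Definition is_join {Q : Poset} (S : Q -> Prop) (j : Q) :=
  is_ub S j /\ forall x, is_ub S x -> le j x.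

Definition order_preserving {A B : Poset} (f : A -> B) :=
  forall x y, le x y -> le (f x) (f y).
Definition order_embedding {A B : Poset} (f : A -> B) :=
  forall x y, le x y <-> le (f x) (f y).

Definition meet_extension {P X : Poset} (e : P -> X) :=
  order_embedding e /\ forall x : X, is_meet (image e (preimage e (up x))) x.
Definition join_extension {P Y : Poset} (e : P -> Y) :=
  order_embedding e /\ forall y : Y, is_join (image e (preimage e (down y))) y.

Definition completely_meet_preserving {A B : Poset} (f : A -> B) :=
  forall S m, is_meet S m -> is_meet (image f S) (f m).
Definition completely_join_preserving {A B : Poset} (f : A -> B) :=
  forall S j, is_join S j -> is_join (image f S) (f j).

Definition canonical_amalgamation {P X Y : Poset} (eX : P -> X) (eY : P -> Y)
    (A : Poset) (piX : X -> A) (piY : Y -> A) : Prop :=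
  completely_meet_preserving piX /\ order_embedding piX /\
  completely_join_preserving piY /\ order_embedding piY /\
  (forall p, piX (eX p) = piY (eY p)) /\
  forall (Q' : Poset) (f : X -> Q') (g : Y -> Q'),
    order_preserving f -> order_preserving g ->
    (forall x y, le (piY y) (piX x) -> le (g y) (f x)) ->
    exists u : A -> Q',
      (order_preserving u /\ (forall x, u (piX x) = f x) /\ (forall y, u (piY y) = g y)) /\
      forall u' : A -> Q', order_preserving u' ->
        (forall x, u' (piX x) = f x) -> (forall y, u' (piY y) = g y) ->
        forall a, u' a = u a.

Definition finite_set {T : Type} (S : T -> Prop) : Prop :=
  exists l : list T, forall x, S x <-> In x l.

Definition nonempty {T : Type} (S : T -> Prop) : Prop := exists x, S x.

Definition join_specification {P : Poset} (U : (P -> Prop) -> Prop) :=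
  (forall S, U S -> exists j, is_join S j) /\ (forall x : P, U (fun y => y = x)).
Definition meet_specification {P : Poset} (D : (P -> Prop) -> Prop) :=
  (forall S, D S -> exists m, is_meet S m) /\ (forall x : P, D (fun y => y = x)).

Definition radius_omega {P : Poset} (U : (P -> Prop) -> Prop) :=
  forall S, U S -> finite_set S.

Definition is_U_ideal {A : Poset} (U : (A -> Prop) -> Prop) (I : A -> Prop) :=
  (forall x y, le x y -> I y -> I x) /\
  (forall S, U S -> subset S I -> forall j, is_join S j -> I j).
Definition is_D_filter {A : Poset} (D : (A -> Prop) -> Prop) (F : A -> Prop) :=
  (forall x y, le x y -> F x -> F y) /\
  (forall S, D S -> subset S F -> forall m, is_meet S m -> F m).

Definition fg_U_ideal {A : Poset} (U : (A -> Prop) -> Prop) (I : A -> Prop) :=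
  exists G : A -> Prop, finite_set G /\ is_U_ideal U I /\ subset G I /\
    forall J, is_U_ideal U J -> subset G J -> subset I J.
Definition fg_D_filter {A : Poset} (D : (A -> Prop) -> Prop) (F : A -> Prop) :=
  exists G : A -> Prop, finite_set G /\ is_D_filter D F /\ subset G F /\
    forall J, is_D_filter D J -> subset G J -> subset F J.

Definition UD_morphism {A B : Poset} (U D : (A -> Prop) -> Prop) (f : A -> B) :=
  order_preserving f /\
  (forall S, U S -> forall j, is_join S j -> is_join (image f S) (f j)) /\
  (forall S, D S -> forall m, is_meet S m -> is_meet (image f S) (f m)).

Lemma sig_set_eq {T : Type} (Pr : (T -> Prop) -> Prop)
  (F G : {S : T -> Prop | Pr S}) :
  subset (proj1_sig F) (proj1_sig G) -> subset (proj1_sig G) (proj1_sig F) -> F = G.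
Proof.
  destruct F as [F hF], G as [G hG]; simpl; intros h1 h2.
  assert (F = G) as <-.
  { apply functional_extensionality; intro x.
    apply propositional_extensionality; split; auto. }
  f_equal; apply proof_irrelevance.
Qed.

Definition Xcar (A : Poset) (D : (A -> Prop) -> Prop) : Type :=
  {F : A -> Prop | nonempty F /\ fg_D_filter D F}.
Definition Ycar (A : Poset) (U : (A -> Prop) -> Prop) : Type :=
  {I : A -> Prop | nonempty I /\ fg_U_ideal U I}.

Definition Xposet {A : Poset} (D : (A -> Prop) -> Prop) : Poset.
Proof.
  refine (@Build_Poset (@Xcar A D)
            (fun F G => subset (proj1_sig G) (proj1_sig F)) _ _ _).
  - intros F x h; exact h.
  - intros F G h1 h2; apply sig_set_eq; assumption.
  - intros F G H h1 h2 x hx; auto.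
Defined.

Definition Yposet {A : Poset} (U : (A -> Prop) -> Prop) : Poset.
Proof.
  refine (@Build_Poset (@Ycar A U)
            (fun I J => subset (proj1_sig I) (proj1_sig J)) _ _ _).
  - intros F x h; exact h.
  - intros F G h1 h2; apply sig_set_eq; assumption.
  - intros F G H h1 h2 x hx; auto.
Defined.

Lemma up_ok (A : Poset) (D : (A -> Prop) -> Prop) (a : A) :
  nonempty (up a) /\ fg_D_filter D (up a).
Proof.
  split. { exists a; apply le_refl. }
  exists (fun y => y = a); repeat split.
  - exists (a :: nil); intro x; simpl; split; [intros ->; auto | intros [->|[]]; auto].
  - intros x y hxy hx; unfold up in *; eapply le_trans; eauto.
  - intros S _ hS m [hlb hgl]; apply hgl; intros y hy; apply hS, hy.
  - intros x ->; apply le_refl.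
  - intros J [hJ _] hG x hx; apply (hJ a x hx), hG; reflexivity.
Qed.

Lemma down_ok (A : Poset) (U : (A -> Prop) -> Prop) (a : A) :
  nonempty (down a) /\ fg_U_ideal U (down a).
Proof.
  split. { exists a; apply le_refl. }
  exists (fun y => y = a); repeat split.
  - exists (a :: nil); intro x; simpl; split; [intros ->; auto | intros [->|[]]; auto].
  - intros x y hxy hy; unfold down in *; eapply le_trans; eauto.
  - intros S _ hS j [hub hlu]; apply hlu; intros y hy; apply hS, hy.
  - intros x ->; apply le_refl.
  - intros J [hJ _] hG x hx; apply (hJ x a hx), hG; reflexivity.
Qed.

Definition eX {A : Poset} (D : (A -> Prop) -> Prop) (a : A) : Xposet D :=
  exist _ (up a) (up_ok A D a).
Definition eY {A : Poset} (U : (A -> Prop) -> Prop) (a : A) : Yposet U :=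
  exist _ (down a) (down_ok A U a).

Record Stage (P : Poset) := {
  st_A : Poset;
  st_U : (st_A -> Prop) -> Prop;
  st_D : (st_A -> Prop) -> Prop;
  st_gamma : P -> st_A }.

Definition next_spec {A B : Poset} (gamma : A -> B) : (B -> Prop) -> Prop :=
  fun Z => nonempty Z /\ finite_set Z /\ subset Z (image gamma (fun _ => True)).

(* is_stage U D n S : S is (A_n, U_n, D_n, gamma_{0n}) for some run of the
   construction (i.e. for some choice of canonical amalgamations). *)
Inductive is_stage (P : Poset) (U D : (P -> Prop) -> Prop) : nat -> Stage P -> Prop :=
| stage0 : is_stage U D 0 (@Build_Stage P P U D (fun p => p))
| stageS : forall n (S : Stage P) (A : Poset)
             (piX : Xposet (st_D S) -> A) (piY : Yposet (st_U S) -> A),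
    is_stage U D n S ->
    canonical_amalgamation (eX (st_D S)) (eY (st_U S)) A piX piY ->
    is_stage U D (Datatypes.S n)
      (@Build_Stage P A
         (next_spec (fun a => piX (eX (st_D S) a)))
         (next_spec (fun a => piX (eX (st_D S) a)))
         (fun p => piX (eX (st_D S) (st_gamma S p)))).

(* tjoin a b l is the k-ary join symbol applied to a :: b :: l (k >= 2) *)
Inductive term (T : Type) : Type :=
| tleaf : T -> term T
| tjoin : term T -> term T -> list (term T) -> term T
| tmeet : term T -> term T -> list (term T) -> term T.

Arguments tleaf {T} _.
Arguments tjoin {T} _ _ _.
Arguments tmeet {T} _ _ _.

Fixpoint complexity {T : Type} (t : term T) : nat :=
  match t with
  | tleaf _ => 0
  | tjoin a b l | tmeet a b l =>
      S (Nat.max (complexity a) (Nat.max (complexity b) (list_max (map complexity l))))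
  end.

Fixpoint is_Tterm {Q : Type} (Tset : Q -> Prop) (t : term Q) : Prop :=
  match t with
  | tleaf x => Tset x
  | tjoin a b l | tmeet a b l =>
      is_Tterm Tset a /\ is_Tterm Tset b /\
      (fix go (l : list (term Q)) : Prop :=
         match l with nil => True | c :: l' => is_Tterm Tset c /\ go l' end) l
  end.

Fixpoint corr {Q : Poset} (t : term Q) (q : Q) : Prop :=
  match t with
  | tleaf x => q = x
  | tjoin a b l =>
      exists qa qb qs, corr a qa /\ corr b qb /\
        (fix go (l : list (term Q)) (qs : list Q) : Prop :=
           match l, qs with
           | nil, nil => True
           | c :: l', r :: qs' => corr c r /\ go l' qs'
           | _, _ => False end) l qs /\
        is_join (fun y => In y (qa :: qb :: qs)) q
  | tmeet a b l =>
      exists qa qb qs, corr a qa /\ corr b qb /\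
        (fix go (l : list (term Q)) (qs : list Q) : Prop :=
           match l, qs with
           | nil, nil => True
           | c :: l', r :: qs' => corr c r /\ go l' qs'
           | _, _ => False end) l qs /\
        is_meet (fun y => In y (qa :: qb :: qs)) q
  end.

Definition k_complete (Q : Poset) (Tset : Q -> Prop) (k : nat) : Prop :=
  forall k', k' < k -> forall t : term Q, is_Tterm Tset t -> complexity t = k' ->
    exists q, corr t q.

(* Induction on n, carrying along that every value of the extension f_n : A_n -> Q is the
   correspondent of an f[P]-term of complexity at most n.  A filter F of X_n is generated by
   a finite non-empty set H, and since f_n preserves the specified meets, the lower bounds of
   f_n[F] and f_n[H] coincide; so f_n[F] has a meet, namely that of the term built from the
   terms of f_n[H], which exists by (n+2)-completeness.  Dually every ideal of Y_n gets a
   join.  These two maps X_n -> Q and Y_n -> Q are monotone and compatible with the order of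
   A_{n+1}, so the universal property of the canonical amalgamation yields f_{n+1}.  Every
   element of A_{n+1} is the image of a filter or an ideal, hence the meet or join of a
   finite subset of gamma_n[A_n]; this gives the term bound at stage n+1, and it forces any
   (U_{n+1}, D_{n+1})-morphism extending f to agree with f_{n+1}. *)

From Stdlib Require Import List Lia ClassicalEpsilon
  FunctionalExtensionality PropExtensionality.

Arguments le_refl {p} x.
Arguments le_antisym {p x y} _ _.
Arguments le_trans {p x y z} _ _.

Lemma set_ext {T : Type} (S S' : T -> Prop) : (forall x, S x <-> S' x) -> S = S'.
Proof.
  intro h; apply functional_extensionality; intro x; apply propositional_extensionality, h.
Qed.

Lemma image_comp {A B C : Type} (g : B -> C) (h : A -> B) (k : A -> C) (S : A -> Prop) :
  (forall a, g (h a) = k a) -> image g (image h S) = image k S.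
Proof.
  intro hk; apply set_ext; intro c; split.
  - intros (b & (a & ha & <-) & <-); exists a; split; auto.
  - intros (a & ha & <-); exists (h a); split; [exists a; split |]; auto.
Qed.

Lemma image_In_map {A B : Type} (h : A -> B) (H : list A) :
  image h (fun a => In a H) = fun b => In b (map h H).
Proof.
  apply set_ext; intro b; rewrite in_map_iff.
  split; intros (a & h1 & h2); exists a; split; auto.
Qed.

Definition Prop_poset : Poset.
Proof.
  refine (@Build_Poset Prop (fun p q => p -> q) _ _ _); auto.
  intros p q hpq hqp; apply propositional_extensionality; tauto.
Defined.

Lemma meet_unique {Q : Poset} {S : Q -> Prop} {m m' : Q} : is_meet S m -> is_meet S m' -> m = m'.
Proof. intros [h1 h2] [h1' h2']; apply le_antisym; auto. Qed.

Lemma join_unique {Q : Poset} {S : Q -> Prop} {j j' : Q} : is_join S j -> is_join S j' -> j = j'.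
Proof. intros [h1 h2] [h1' h2']; apply le_antisym; auto. Qed.

Lemma meet_of_same_lbs {Q : Poset} (S S' : Q -> Prop) m :
  (forall x, is_lb S x <-> is_lb S' x) -> is_meet S m <-> is_meet S' m.
Proof. intro h; unfold is_meet; split; intros [hm hg]; split; firstorder. Qed.

Lemma join_of_same_ubs {Q : Poset} (S S' : Q -> Prop) j :
  (forall x, is_ub S x <-> is_ub S' x) -> is_join S j <-> is_join S' j.
Proof. intro h; unfold is_join; split; intros [hj hl]; split; firstorder. Qed.

Lemma meet_image_up {A Q : Poset} (h : A -> Q) (a : A) :
  order_preserving h -> is_meet (image h (up a)) (h a).
Proof.
  intro hh; split.
  - intros q (b & hab & <-); apply hh, hab.
  - intros x hx; apply hx; exists a; split; [apply le_refl | reflexivity].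
Qed.

Definition nonempty_part {T : Type} (U : (T -> Prop) -> Prop) : (T -> Prop) -> Prop :=
  fun Z => U Z /\ nonempty Z.

Lemma UD_morphism_sub {A B : Poset} {U D U' D' : (A -> Prop) -> Prop} {g : A -> B} :
  (forall Z, U' Z -> U Z) -> (forall Z, D' Z -> D Z) ->
  UD_morphism U D g -> UD_morphism U' D' g.
Proof. intros hU hD (hmono & hjoin & hmeet); split; [exact hmono | split; auto]. Qed.

Lemma next_spec_image {A B : Poset} (g : A -> B) (Z : A -> Prop) :
  nonempty Z -> finite_set Z -> nonempty_part (next_spec g) (image g Z).
Proof.
  intros [a ha] [l hl].
  assert (hne : nonempty (image g Z)) by (exists (g a), a; auto).
  split; [split; [exact hne | split] | exact hne].
  - exists (map g l); intro b; rewrite in_map_iff.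
    split; intros (a' & h1 & h2); exists a'; split; try apply hl; auto.
  - intros b (a' & _ & <-); exists a'; auto.
Qed.

Lemma next_spec_image_list {A B : Poset} (g : A -> B) (H : list A) :
  H <> nil -> nonempty_part (next_spec g) (image g (fun a => In a H)).
Proof.
  intro hH; apply next_spec_image; [| exists H; intro; apply iff_refl].
  destruct H as [| a H]; [congruence | exists a; left; reflexivity].
Qed.

Lemma map_surj_list {A B : Type} (g : A -> B) (l : list B) :
  (forall b, In b l -> exists a, g a = b) -> exists H : list A, map g H = l.
Proof.
  induction l as [| b l IH]; intro hl; [exists nil; reflexivity |].
  destruct (hl b (or_introl eq_refl)) as [a <-].
  destruct IH as [H <-]; [intros b' hb'; apply hl; right; exact hb' |].
  exists (a :: H); reflexivity.
Qed.

Lemma next_spec_list {A B : Poset} (g : A -> B) (Z : B -> Prop) :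
  next_spec g Z -> exists H : list A, H <> nil /\ Z = image g (fun a => In a H).
Proof.
  intros ([b hb] & [l hl] & hZ).
  destruct (map_surj_list g l) as [H hH].
  { intros b' hb'; destruct (hZ b' (proj2 (hl b') hb')) as (a & _ & ha); eauto. }
  assert (hZH : Z = image g (fun a => In a H))
    by (rewrite image_In_map, hH; apply set_ext, hl).
  exists H; split; [| exact hZH].
  intros ->; rewrite hZH in hb; destruct hb as (a & [] & _).
Qed.

Definition least_D_filter {A : Poset} (D : (A -> Prop) -> Prop) (G F : A -> Prop) :=
  is_D_filter D F /\ subset G F /\ forall J, is_D_filter D J -> subset G J -> subset F J.
Definition least_U_ideal {A : Poset} (U : (A -> Prop) -> Prop) (G I : A -> Prop) :=
  is_U_ideal U I /\ subset G I /\ forall J, is_U_ideal U J -> subset G J -> subset I J.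

Definition generated_D_filter {A : Poset} (D : (A -> Prop) -> Prop) (G : A -> Prop) : A -> Prop :=
  fun a => forall J, is_D_filter D J -> subset G J -> J a.
Definition generated_U_ideal {A : Poset} (U : (A -> Prop) -> Prop) (G : A -> Prop) : A -> Prop :=
  fun a => forall J, is_U_ideal U J -> subset G J -> J a.

Lemma generated_D_filter_least {A : Poset} (D : (A -> Prop) -> Prop) (G : A -> Prop) :
  least_D_filter D G (generated_D_filter D G).
Proof.
  repeat split.
  - intros a b hab ha J hJ hGJ; exact (proj1 hJ a b hab (ha J hJ hGJ)).
  - intros Z hZ hZF m hm J hJ hGJ.
    apply (proj2 hJ Z hZ); [intros z hz; exact (hZF z hz J hJ hGJ) | exact hm].
  - intros a ha J _ hGJ; exact (hGJ a ha).
  - intros J hJ hGJ a ha; exact (ha J hJ hGJ).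
Qed.

Lemma generated_U_ideal_least {A : Poset} (U : (A -> Prop) -> Prop) (G : A -> Prop) :
  least_U_ideal U G (generated_U_ideal U G).
Proof.
  repeat split.
  - intros a b hab hb J hJ hGJ; exact (proj1 hJ a b hab (hb J hJ hGJ)).
  - intros Z hZ hZI j hj J hJ hGJ.
    apply (proj2 hJ Z hZ); [intros z hz; exact (hZI z hz J hJ hGJ) | exact hj].
  - intros a ha J _ hGJ; exact (hGJ a ha).
  - intros J hJ hGJ a ha; exact (ha J hJ hGJ).
Qed.

Lemma meet_image_least_D_filter {A Q : Poset} {U D : (A -> Prop) -> Prop} {h : A -> Q}
  {G F : A -> Prop} {m : Q} :
  UD_morphism U D h -> least_D_filter D G F ->
  is_meet (image h F) m <-> is_meet (image h G) m.
Proof.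
  intros (hmono & _ & hmeet) (_ & hGF & hleast); apply meet_of_same_lbs; intro x; split.
  - intros hx q (a & ha & <-); apply hx; exists a; auto.
  - intros hx.
    assert (hxF : subset F (fun a => le x (h a))).
    { apply hleast; [split |].
      - intros a b hab ha; exact (le_trans ha (hmono a b hab)).
      - intros Z hZ hZx n hn; apply (proj2 (hmeet Z hZ n hn)).
        intros q (a & ha & <-); exact (hZx a ha).
      - intros a ha; apply hx; exists a; auto. }
    intros q (a & ha & <-); exact (hxF a ha).
Qed.

Lemma join_image_least_U_ideal {A Q : Poset} {U D : (A -> Prop) -> Prop} {h : A -> Q}
  {G I : A -> Prop} {j : Q} :
  UD_morphism U D h -> least_U_ideal U G I ->
  is_join (image h I) j <-> is_join (image h G) j.
Proof.
  intros (hmono & hjoin & _) (_ & hGI & hleast); apply join_of_same_ubs; intro x; split.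
  - intros hx q (a & ha & <-); apply hx; exists a; auto.
  - intros hx.
    assert (hxI : subset I (fun a => le (h a) x)).
    { apply hleast; [split |].
      - intros a b hab hb; exact (le_trans (hmono a b hab) hb).
      - intros Z hZ hZx n hn; apply (proj2 (hjoin Z hZ n hn)).
        intros q (a & ha & <-); exact (hZx a ha).
      - intros a ha; apply hx; exists a; auto. }
    intros q (a & ha & <-); exact (hxI a ha).
Qed.

Lemma Xposet_filter {A : Poset} {D : (A -> Prop) -> Prop} (x : Xposet D) :
  is_D_filter D (proj1_sig x).
Proof. destruct x as [F hx]; cbn; destruct hx as [_ (G & _ & hF & _)]; exact hF. Qed.

Lemma Yposet_ideal {A : Poset} {U : (A -> Prop) -> Prop} (y : Yposet U) :
  is_U_ideal U (proj1_sig y).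
Proof. destruct y as [I hy]; cbn; destruct hy as [_ (G & _ & hI & _)]; exact hI. Qed.

(* The generating set may be empty; adding a point of the filter makes it non-empty. *)
Lemma Xposet_generators {A : Poset} {D : (A -> Prop) -> Prop} (x : Xposet D) :
  exists H : list A, H <> nil /\ least_D_filter D (fun a => In a H) (proj1_sig x).
Proof.
  destruct x as [F hx]; cbn; destruct hx as [[a0 ha0] (G & [l hl] & hF & hGF & hleast)].
  exists (a0 :: l); split; [discriminate | split; [exact hF | split]].
  - intros a [<- | ha]; [exact ha0 | apply hGF, hl, ha].
  - intros J hJ hHJ; apply hleast; [exact hJ |].
    intros a ha; apply hHJ; right; apply hl, ha.
Qed.

Lemma Yposet_generators {A : Poset} {U : (A -> Prop) -> Prop} (y : Yposet U) :
  exists H : list A, H <> nil /\ least_U_ideal U (fun a => In a H) (proj1_sig y).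
Proof.
  destruct y as [I hy]; cbn; destruct hy as [[a0 ha0] (G & [l hl] & hI & hGI & hleast)].
  exists (a0 :: l); split; [discriminate | split; [exact hI | split]].
  - intros a [<- | ha]; [exact ha0 | apply hGI, hl, ha].
  - intros J hJ hHJ; apply hleast; [exact hJ |].
    intros a ha; apply hHJ; right; apply hl, ha.
Qed.

Lemma Xposet_of_generators {A : Poset} (D : (A -> Prop) -> Prop) (H : list A) :
  H <> nil -> exists x : Xposet D, least_D_filter D (fun a => In a H) (proj1_sig x).
Proof.
  intro hH; set (F := generated_D_filter D (fun a => In a H)).
  assert (hF : nonempty F /\ fg_D_filter D F).
  { split.
    - destruct H as [| a H]; [congruence |].
      exists a; apply generated_D_filter_least; left; reflexivity.
    - exists (fun a => In a H); split; [exists H; intro; apply iff_refl |].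
      apply generated_D_filter_least. }
  exists (exist _ F hF); apply generated_D_filter_least.
Qed.

Lemma Yposet_of_generators {A : Poset} (U : (A -> Prop) -> Prop) (H : list A) :
  H <> nil -> exists y : Yposet U, least_U_ideal U (fun a => In a H) (proj1_sig y).
Proof.
  intro hH; set (I := generated_U_ideal U (fun a => In a H)).
  assert (hI : nonempty I /\ fg_U_ideal U I).
  { split.
    - destruct H as [| a H]; [congruence |].
      exists a; apply generated_U_ideal_least; left; reflexivity.
    - exists (fun a => In a H); split; [exists H; intro; apply iff_refl |].
      apply generated_U_ideal_least. }
  exists (exist _ I hI); apply generated_U_ideal_least.
Qed.

Lemma eX_embedding {A : Poset} (D : (A -> Prop) -> Prop) : order_embedding (eX D).
Proof.
  intros a b; split.
  - intros hab c hbc; exact (le_trans hab hbc).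
  - intro hba; exact (hba b (le_refl b)).
Qed.

Lemma eX_meet_generators {A : Poset} {D : (A -> Prop) -> Prop} {x : Xposet D} {G : A -> Prop} :
  least_D_filter D G (proj1_sig x) -> is_meet (image (eX D) G) x.
Proof.
  intros (hF & hGF & hleast); split.
  - intros y (a & ha & <-) b hab; exact (proj1 hF a b hab (hGF a ha)).
  - intros z hz; apply (hleast _ (Xposet_filter z)).
    intros a ha; exact (hz (eX D a) (ex_intro _ a (conj ha eq_refl)) a (le_refl a)).
Qed.

Lemma eY_join_generators {A : Poset} {U : (A -> Prop) -> Prop} {y : Yposet U} {G : A -> Prop} :
  least_U_ideal U G (proj1_sig y) -> is_join (image (eY U) G) y.
Proof.
  intros (hI & hGI & hleast); split.
  - intros z (a & ha & <-) b hba; exact (proj1 hI b a hba (hGI a ha)).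
  - intros z hz; apply (hleast _ (Yposet_ideal z)).
    intros a ha; exact (hz (eY U a) (ex_intro _ a (conj ha eq_refl)) a (le_refl a)).
Qed.

Lemma eX_preserves_D_meets {A : Poset} (D : (A -> Prop) -> Prop) {Z : A -> Prop} {m : A} :
  D Z -> is_meet Z m -> is_meet (image (eX D) Z) (eX D m).
Proof.
  intros hZ [hlb hgl]; split.
  - intros y (s & hs & <-) b hsb; exact (le_trans (hlb s hs) hsb).
  - intros x hx b hmb; apply (proj1 (Xposet_filter x) m b hmb).
    apply (proj2 (Xposet_filter x) Z hZ); [| split; assumption].
    intros s hs; exact (hx (eX D s) (ex_intro _ s (conj hs eq_refl)) s (le_refl s)).
Qed.

Lemma eY_preserves_U_joins {A : Poset} (U : (A -> Prop) -> Prop) {Z : A -> Prop} {j : A} :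
  U Z -> is_join Z j -> is_join (image (eY U) Z) (eY U j).
Proof.
  intros hZ [hub hlu]; split.
  - intros y (s & hs & <-) b hbs; exact (le_trans hbs (hub s hs)).
  - intros y hy b hbj; apply (proj1 (Yposet_ideal y) b j hbj).
    apply (proj2 (Yposet_ideal y) Z hZ); [| split; assumption].
    intros s hs; exact (hy (eY U s) (ex_intro _ s (conj hs eq_refl)) s (le_refl s)).
Qed.

Lemma amalgamation_jointly_epic {P X Y A : Poset} {eP : P -> X} {eQ : P -> Y}
  {piX : X -> A} {piY : Y -> A} :
  canonical_amalgamation eP eQ A piX piY ->
  forall (Q : Poset) (u1 u2 : A -> Q), order_preserving u1 -> order_preserving u2 ->
  (forall x, u1 (piX x) = u2 (piX x)) -> (forall y, u1 (piY y) = u2 (piY y)) ->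
  forall a, u1 a = u2 a.
Proof.
  intros (_ & hXe & _ & hYe & _ & huniv) Q u1 u2 hu1 hu2 hX hY a.
  destruct (huniv Q (fun x => u1 (piX x)) (fun y => u1 (piY y))) as (u & _ & hu).
  - intros x x' hxx'; apply hu1, hXe, hxx'.
  - intros y y' hyy'; apply hu1, hYe, hyy'.
  - intros x y hyx; apply hu1, hyx.
  - assert (hu1a : u1 a = u a) by (apply hu; auto).
    assert (hu2a : u2 a = u a) by (apply hu; auto; intro; symmetry; auto).
    congruence.
Qed.

(* Test the universal property against [Prop]: [fun b => le a b] and "some covered point
   lies between [a] and [b]" agree on covered points, hence everywhere; at [a] itself this
   yields a covered point equal to [a]. *)
Lemma amalgamation_covered {P X Y A : Poset} {eP : P -> X} {eQ : P -> Y}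
  {piX : X -> A} {piY : Y -> A} :
  canonical_amalgamation eP eQ A piX piY ->
  forall a, (exists x, a = piX x) \/ (exists y, a = piY y).
Proof.
  intros hca a.
  set (covered := fun z : A => (exists x, z = piX x) \/ (exists y, z = piY y)).
  set (u1 := (fun b => le a b) : A -> Prop_poset).
  set (u2 := (fun b => exists z, covered z /\ le z b /\ le a z) : A -> Prop_poset).
  assert (hu2_covered : forall z, covered z -> u2 z = u1 z).
  { intros z hz; apply propositional_extensionality; split.
    - intros (z' & _ & hz'z & haz'); exact (le_trans haz' hz'z).
    - intro haz; exists z; split; [exact hz | split; [apply le_refl | exact haz]]. }
  assert (hu : u2 a = u1 a).
  { apply (amalgamation_jointly_epic hca Prop_poset).
    - intros b b' hbb' (z & hz & hzb & haz); exists z; split; [| split]; auto.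
      exact (le_trans hzb hbb').
    - intros b b' hbb' hab; exact (le_trans hab hbb').
    - intro x; apply hu2_covered; left; exists x; reflexivity.
    - intro y; apply hu2_covered; right; exists y; reflexivity. }
  assert (ha : u2 a) by (rewrite hu; apply le_refl).
  destruct ha as (z & hz & hza & haz).
  rewrite (le_antisym haz hza); exact hz.
Qed.

Section Amalgamation.

Context {A B : Poset} {UA DA : (A -> Prop) -> Prop}.
Context {piX : Xposet DA -> B} {piY : Yposet UA -> B}.
Context (hca : canonical_amalgamation (eX DA) (eY UA) B piX piY).

Local Notation gamma := (fun a => piX (eX DA a)).

Lemma gamma_embedding : order_embedding gamma.
Proof.
  destruct hca as (_ & hXe & _); intros a b.
  rewrite (eX_embedding DA a b); apply hXe.
Qed.

Lemma piX_meet_generators (x : Xposet DA) (G : A -> Prop) :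
  least_D_filter DA G (proj1_sig x) -> is_meet (image gamma G) (piX x).
Proof.
  destruct hca as (hXm & _); intro hG.
  rewrite <- (image_comp piX (eX DA) gamma) by reflexivity.
  exact (hXm _ _ (eX_meet_generators hG)).
Qed.

Lemma piY_join_generators (y : Yposet UA) (G : A -> Prop) :
  least_U_ideal UA G (proj1_sig y) -> is_join (image gamma G) (piY y).
Proof.
  destruct hca as (_ & _ & hYj & _ & hXY & _); intro hG.
  rewrite <- (image_comp piY (eY UA) gamma) by (intro; symmetry; apply hXY).
  exact (hYj _ _ (eY_join_generators hG)).
Qed.

Lemma gamma_UD_morphism : UD_morphism UA DA gamma.
Proof.
  destruct hca as (hXm & _ & hYj & _ & hXY & _).
  split; [intros a b; apply gamma_embedding | split].
  - intros Z hZ j hj.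
    rewrite hXY, <- (image_comp piY (eY UA) gamma) by (intro; symmetry; apply hXY).
    exact (hYj _ _ (eY_preserves_U_joins UA hZ hj)).
  - intros Z hZ m hm; rewrite <- (image_comp piX (eX DA) gamma) by reflexivity.
    exact (hXm _ _ (eX_preserves_D_meets DA hZ hm)).
Qed.

Lemma le_of_piY_le_piX (x : Xposet DA) (y : Yposet UA) (p q : A) :
  le (piY y) (piX x) -> proj1_sig y p -> proj1_sig x q -> le p q.
Proof.
  destruct hca as (_ & hXe & _ & hYe & hXY & _); intros hyx hp hq.
  apply gamma_embedding; cbn beta; rewrite hXY.
  apply (le_trans (y := piY y)); [apply hYe | apply (le_trans hyx); apply hXe].
  - intros a ha; exact (proj1 (Yposet_ideal y) a p ha hp).
  - intros a ha; exact (proj1 (Xposet_filter x) q a ha hq).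
Qed.

Lemma UD_morphism_precomp_gamma (Q : Poset) (g : B -> Q) :
  radius_omega UA -> radius_omega DA ->
  UD_morphism (nonempty_part (next_spec gamma)) (nonempty_part (next_spec gamma)) g ->
  UD_morphism (nonempty_part UA) (nonempty_part DA) (fun a => g (gamma a)).
Proof.
  intros hUr hDr (gmono & gjoin & gmeet).
  destruct gamma_UD_morphism as (hmono & hjoin & hmeet).
  split; [| split].
  - intros a b hab; apply gmono, hmono, hab.
  - intros Z [hZ hne] j hj; rewrite <- (image_comp g gamma) by reflexivity.
    apply gjoin; [apply next_spec_image; auto | apply hjoin; assumption].
  - intros Z [hZ hne] m hm; rewrite <- (image_comp g gamma) by reflexivity.
    apply gmeet; [apply next_spec_image; auto | apply hmeet; assumption].
Qed.

Section Extension.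

Context {Q : Poset} {fn : A -> Q} (hfn : UD_morphism UA DA fn).
Context {FX : Xposet DA -> Q} {GY : Yposet UA -> Q}.
Context (FX_meet : forall x, is_meet (image fn (proj1_sig x)) (FX x)).
Context (GY_join : forall y, is_join (image fn (proj1_sig y)) (GY y)).

Lemma FX_generators (x : Xposet DA) (G : A -> Prop) :
  least_D_filter DA G (proj1_sig x) -> is_meet (image fn G) (FX x).
Proof. intro hG; apply (meet_image_least_D_filter hfn hG), FX_meet. Qed.

Lemma GY_generators (y : Yposet UA) (G : A -> Prop) :
  least_U_ideal UA G (proj1_sig y) -> is_join (image fn G) (GY y).
Proof. intro hG; apply (join_image_least_U_ideal hfn hG), GY_join. Qed.

Lemma FX_monotone : order_preserving FX.
Proof.
  intros x x' hxx'; apply (proj2 (FX_meet x')).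
  intros q (a & ha & <-); apply (proj1 (FX_meet x)).
  exists a; split; [apply hxx', ha | reflexivity].
Qed.

Lemma GY_monotone : order_preserving GY.
Proof.
  intros y y' hyy'; apply (proj2 (GY_join y)).
  intros q (a & ha & <-); apply (proj1 (GY_join y')).
  exists a; split; [apply hyy', ha | reflexivity].
Qed.

Lemma GY_le_FX (x : Xposet DA) (y : Yposet UA) : le (piY y) (piX x) -> le (GY y) (FX x).
Proof.
  intro hyx; apply (proj2 (GY_join y)); intros q (p & hp & <-).
  apply (proj2 (FX_meet x)); intros q' (p' & hp' & <-).
  apply (proj1 hfn), (le_of_piY_le_piX x y p p' hyx hp hp').
Qed.

Lemma FX_eX (a : A) : FX (eX DA a) = fn a.
Proof. exact (meet_unique (FX_meet (eX DA a)) (meet_image_up fn a (proj1 hfn))). Qed.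

Lemma extension_on_piX_piY (g : B -> Q) :
  UD_morphism (nonempty_part (next_spec gamma)) (nonempty_part (next_spec gamma)) g ->
  (forall a, g (gamma a) = fn a) ->
  (forall x, g (piX x) = FX x) /\ (forall y, g (piY y) = GY y).
Proof.
  intros (_ & gjoin & gmeet) hg; split.
  - intro x; destruct (Xposet_generators x) as (H & hH & hx).
    pose proof (gmeet _ (next_spec_image_list gamma H hH) _ (piX_meet_generators x _ hx)) as hgx.
    rewrite (image_comp g gamma fn _ hg) in hgx.
    exact (meet_unique hgx (FX_generators x _ hx)).
  - intro y; destruct (Yposet_generators y) as (H & hH & hy).
    pose proof (gjoin _ (next_spec_image_list gamma H hH) _ (piY_join_generators y _ hy)) as hgy.
    rewrite (image_comp g gamma fn _ hg) in hgy.
    exact (join_unique hgy (GY_generators y _ hy)).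
Qed.

Context {u : B -> Q} (u_piX : forall x, u (piX x) = FX x) (u_piY : forall y, u (piY y) = GY y).

Lemma u_gamma (a : A) : u (gamma a) = fn a.
Proof. cbn beta; rewrite u_piX; apply FX_eX. Qed.

Lemma u_preserves_next_meets (Z : B -> Prop) (m : B) :
  next_spec gamma Z -> is_meet Z m -> is_meet (image u Z) (u m).
Proof.
  intros hZ hm; destruct (next_spec_list gamma Z hZ) as (H & hH & ->).
  destruct (Xposet_of_generators DA H hH) as [x hx].
  rewrite (meet_unique hm (piX_meet_generators x _ hx)), u_piX, (image_comp u gamma fn _ u_gamma).
  exact (FX_generators x _ hx).
Qed.

Lemma u_preserves_next_joins (Z : B -> Prop) (j : B) :
  next_spec gamma Z -> is_join Z j -> is_join (image u Z) (u j).
Proof.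
  intros hZ hj; destruct (next_spec_list gamma Z hZ) as (H & hH & ->).
  destruct (Yposet_of_generators UA H hH) as [y hy].
  rewrite (join_unique hj (piY_join_generators y _ hy)), u_piY, (image_comp u gamma fn _ u_gamma).
  exact (GY_generators y _ hy).
Qed.

Lemma u_is_finite_meet_or_join (b : B) :
  exists H : list A, H <> nil /\
    (is_meet (image fn (fun a => In a H)) (u b) \/ is_join (image fn (fun a => In a H)) (u b)).
Proof.
  destruct (amalgamation_covered hca b) as [[x ->] | [y ->]].
  - destruct (Xposet_generators x) as (H & hH & hx).
    exists H; split; [exact hH | left; rewrite u_piX; exact (FX_generators x _ hx)].
  - destruct (Yposet_generators y) as (H & hH & hy).
    exists H; split; [exact hH | right; rewrite u_piY; exact (GY_generators y _ hy)].
Qed.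

End Extension.

Theorem extension_along_amalgamation (Q : Poset) (fn : A -> Q) :
  UD_morphism UA DA fn ->
  (forall H : list A, H <> nil -> exists m, is_meet (image fn (fun a => In a H)) m) ->
  (forall H : list A, H <> nil -> exists j, is_join (image fn (fun a => In a H)) j) ->
  exists u : B -> Q,
    UD_morphism (next_spec gamma) (next_spec gamma) u /\ (forall a, u (gamma a) = fn a) /\
    (forall b, exists H : list A, H <> nil /\
       (is_meet (image fn (fun a => In a H)) (u b) \/
        is_join (image fn (fun a => In a H)) (u b))) /\
    forall g : B -> Q,
      UD_morphism (nonempty_part (next_spec gamma)) (nonempty_part (next_spec gamma)) g ->
      (forall a, g (gamma a) = fn a) -> forall b, g b = u b.
Proof.
  intros hfn hmeets hjoins.
  destruct (choice (fun (x : Xposet DA) m => is_meet (image fn (proj1_sig x)) m)) as [FX hFX].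
  { intro x; destruct (Xposet_generators x) as (H & hH & hx).
    destruct (hmeets H hH) as [m hm].
    exists m; apply (meet_image_least_D_filter hfn hx), hm. }
  destruct (choice (fun (y : Yposet UA) j => is_join (image fn (proj1_sig y)) j)) as [GY hGY].
  { intro y; destruct (Yposet_generators y) as (H & hH & hy).
    destruct (hjoins H hH) as [j hj].
    exists j; apply (join_image_least_U_ideal hfn hy), hj. }
  pose proof hca as (_ & _ & _ & _ & _ & huniv).
  destruct (huniv Q FX GY (FX_monotone hFX) (GY_monotone hGY) (GY_le_FX hfn hFX hGY))
    as (u & (hu & uX & uY) & _).
  exists u; split; [split; [exact hu | split] | split; [| split]].
  - intros Z hZ j; eapply u_preserves_next_joins; eassumption.
  - intros Z hZ m; eapply u_preserves_next_meets; eassumption.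
  - eapply u_gamma; eassumption.
  - eapply u_is_finite_meet_or_join; eassumption.
  - intros g hg hgfn; destruct (extension_on_piX_piY hfn hFX hGY g hg hgfn) as [gX gY].
    apply (amalgamation_jointly_epic hca Q g u (proj1 hg) hu); intro; rewrite ?uX, ?uY; auto.
Qed.

End Amalgamation.

Fixpoint term_nested_ind {T : Type} (Pr : term T -> Prop)
  (hleaf : forall x, Pr (tleaf x))
  (hjoin : forall a b l, Pr a -> Pr b -> Forall Pr l -> Pr (tjoin a b l))
  (hmeet : forall a b l, Pr a -> Pr b -> Forall Pr l -> Pr (tmeet a b l))
  (t : term T) {struct t} : Pr t :=
  let fix list_ind (l : list (term T)) : Forall Pr l :=
    match l with
    | nil => Forall_nil Pr
    | c :: l' => Forall_cons c (term_nested_ind Pr hleaf hjoin hmeet c) (list_ind l')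
    end in
  match t with
  | tleaf x => hleaf x
  | tjoin a b l =>
      hjoin a b l (term_nested_ind Pr hleaf hjoin hmeet a)
        (term_nested_ind Pr hleaf hjoin hmeet b) (list_ind l)
  | tmeet a b l =>
      hmeet a b l (term_nested_ind Pr hleaf hjoin hmeet a)
        (term_nested_ind Pr hleaf hjoin hmeet b) (list_ind l)
  end.

(* A [fix] inside a [Definition] rather than a [Fixpoint], so that [corrs] and
   [are_Tterms] are convertible with the local fixpoints of [corr] and [is_Tterm]. *)
Definition corrs {Q : Poset} : list (term Q) -> list Q -> Prop :=
  fix corrs ts qs :=
    match ts, qs with
    | nil, nil => True
    | t :: ts', q :: qs' => corr t q /\ corrs ts' qs'
    | _, _ => False
    end.

Definition are_Tterms {Q : Type} (T : Q -> Prop) : list (term Q) -> Prop :=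
  fix are_Tterms ts :=
    match ts with nil => True | t :: ts' => is_Tterm T t /\ are_Tterms ts' end.

Definition definable {Q : Poset} (T : Q -> Prop) (k : nat) (q : Q) : Prop :=
  exists t, is_Tterm T t /\ complexity t <= k /\ corr t q.

Lemma corrs_unique {Q : Poset} (ts : list (term Q)) :
  Forall (fun t => forall q q', corr t q -> corr t q' -> q = q') ts ->
  forall qs qs', corrs ts qs -> corrs ts qs' -> qs = qs'.
Proof.
  induction 1 as [| t ts ht _ IH]; intros [| q qs] [| q' qs']; cbn; try tauto.
  intros [hq hqs] [hq' hqs']; f_equal; eauto.
Qed.

Lemma corr_unique {Q : Poset} (t : term Q) (q q' : Q) : corr t q -> corr t q' -> q = q'.
Proof.
  revert q q'; induction t as [x | a b l IHa IHb IHl | a b l IHa IHb IHl] using term_nested_ind;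
    cbn; [intros q q' -> ->; reflexivity | |];
    intros q q' (qa & qb & qs & ha & hb & hs & hq) (qa' & qb' & qs' & ha' & hb' & hs' & hq');
    change (corrs l qs) in hs; change (corrs l qs') in hs';
    rewrite (IHa _ _ ha ha'), (IHb _ _ hb hb'), (corrs_unique l IHl _ _ hs hs') in hq.
  - exact (join_unique hq hq').
  - exact (meet_unique hq hq').
Qed.

Lemma definable_terms {Q : Poset} (T : Q -> Prop) (k : nat) (l : list Q) :
  (forall q, In q l -> definable T k q) ->
  exists ts, are_Tterms T ts /\ Forall (fun t => complexity t <= k) ts /\ corrs ts l.
Proof.
  induction l as [| q l IH]; intro hl; [exists nil; cbn; auto |].
  destruct (hl q (or_introl eq_refl)) as (t & ht & hk & hq).
  destruct IH as (ts & hts & hks & hcs); [intros q' hq'; apply hl; right; exact hq' |].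
  exists (t :: ts); cbn; auto.
Qed.

Definition tnode {T : Type} (join : bool) : term T -> term T -> list (term T) -> term T :=
  if join then @tjoin T else @tmeet T.

Definition is_extremum {Q : Poset} (join : bool) : (Q -> Prop) -> Q -> Prop :=
  if join then @is_join Q else @is_meet Q.

Lemma is_extremum_singleton {Q : Poset} (join : bool) (x : Q) :
  is_extremum join (fun q => In q (x :: nil)) x.
Proof.
  destruct join; split; try (intros q [<- | []]; apply le_refl);
    intros z hz; apply hz; left; reflexivity.
Qed.

(* The [|l|]-ary symbol is used rather than nested binary ones, so that the complexity
   grows by one only. *)
Lemma definable_extremum {Q : Poset} (T : Q -> Prop) (k : nat) (join : bool) (l : list Q) :
  k_complete Q T (S (S k)) -> l <> nil -> (forall q, In q l -> definable T k q) ->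
  exists m, is_extremum join (fun q => In q l) m /\ definable T (S k) m.
Proof.
  intros hc hl hdef; destruct (definable_terms T k l hdef) as (ts & hT & hk & hts).
  destruct l as [| x [| y l]]; [congruence | |].
  - destruct (hdef x (or_introl eq_refl)) as (t & ht & htk & hx).
    exists x; split; [apply is_extremum_singleton | exists t; auto].
  - destruct ts as [| tx [| ty ts]]; cbn in hts; try tauto.
    destruct hts as (hx & hy & hts).
    apply Forall_cons_iff in hk as [hxk hk]; apply Forall_cons_iff in hk as [hyk hk].
    set (t := tnode join tx ty ts).
    assert (htk : complexity t <= S k).
    { assert (list_max (map complexity ts) <= k) by (apply list_max_le, Forall_map, hk).
      destruct join; cbn; lia. }
    assert (ht : is_Tterm T t) by (destruct join; exact hT).
    destruct (hc (complexity t) ltac:(lia) t ht eq_refl) as [m hm].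
    exists m; split; [| exists t; auto].
    assert (hm' : exists qa qb qs, corr tx qa /\ corr ty qb /\ corrs ts qs /\
                    is_extremum join (fun q => In q (qa :: qb :: qs)) m)
      by (destruct join; exact hm).
    destruct hm' as (qa & qb & qs & ha & hb & hs & hext).
    assert (hqs : qs = l).
    { apply (corrs_unique ts); [| exact hs | exact hts].
      apply Forall_forall; intros t' _; apply corr_unique. }
    rewrite (corr_unique tx qa x ha hx), (corr_unique ty qb y hb hy), hqs in hext.
    exact hext.
Qed.

Section Construction.

Variables (P Q : Poset) (U D : (P -> Prop) -> Prop) (f : P -> Q).
Hypotheses (hUr : radius_omega U) (hDr : radius_omega D) (hf : UD_morphism U D f).

Local Notation T := (image f (fun _ => True)).

Lemma stage_radius (n : nat) (St : Stage P) :
  is_stage U D n St -> radius_omega (st_U St) /\ radius_omega (st_D St).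
Proof. induction 1; [auto | split; intros Z (_ & hZ & _); exact hZ]. Qed.

(* Uniqueness is stated for maps preserving only the non-empty specified joins and meets:
   [g] composed with [gamma_n] preserves the join of [Z] in [U_n] only when [gamma_n[Z]] is
   in [U_(n+1)], i.e. when [Z] is non-empty. *)
Lemma stage_extension (n : nat) (St : Stage P) :
  is_stage U D n St -> k_complete Q T (S n) ->
  exists fs : st_A St -> Q,
    UD_morphism (st_U St) (st_D St) fs /\ (forall p, fs (st_gamma St p) = f p) /\
    (forall a, definable T n (fs a)) /\
    forall g : st_A St -> Q,
      UD_morphism (nonempty_part (st_U St)) (nonempty_part (st_D St)) g ->
      (forall p, g (st_gamma St p) = f p) -> forall a, g a = fs a.
Proof.
  intro hS; induction hS as [| n St A piX piY hS IH hca]; intro hc.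
  - exists f; split; [exact hf | split; [reflexivity | split]].
    + intro a; exists (tleaf (f a)); cbn; split; [exists a |]; auto.
    + intros g _ hg; exact hg.
  - destruct IH as (fn & hfn & hfn_f & hfn_def & hfn_uniq); [intros k hk; apply hc; lia |].
    destruct (stage_radius n St hS) as [hUn hDn].
    assert (hbounds : forall (join : bool) (H : list (st_A St)), H <> nil ->
              exists m, is_extremum join (image fn (fun a => In a H)) m /\ definable T (S n) m).
    { intros join H hH; rewrite image_In_map.
      apply definable_extremum; [exact hc | destruct H; [congruence | discriminate] |].
      intros q hq; apply in_map_iff in hq as (a & <- & _); apply hfn_def. }
    destruct (extension_along_amalgamation hca Q fn hfn) as (u & hu & hu_fn & hu_def & hu_uniq).
    + intros H hH; destruct (hbounds false H hH) as (m & hm & _); exists m; exact hm.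
    + intros H hH; destruct (hbounds true H hH) as (j & hj & _); exists j; exact hj.
    + exists u; split; [exact hu | split; [| split]].
      * intro p; cbn; rewrite hu_fn; apply hfn_f.
      * intro b; destruct (hu_def b) as (H & hH & [hm | hj]).
        -- destruct (hbounds false H hH) as (m & hm' & hdef).
           rewrite (meet_unique hm hm'); exact hdef.
        -- destruct (hbounds true H hH) as (j & hj' & hdef).
           rewrite (join_unique hj hj'); exact hdef.
      * intros g hg hgf.
        apply (hu_uniq g hg), (hfn_uniq _ (UD_morphism_precomp_gamma hca Q g hUn hDn hg) hgf).
Qed.

End Construction.

Theorem theorem10p8 (P Q : Poset) (U D : (P -> Prop) -> Prop)
  (hU : join_specification U) (hD : meet_specification D)
  (hUr : radius_omega U) (hDr : radius_omega D)
  (n : nat) (St : Stage P) (hS : is_stage U D n St)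
  (f : P -> Q) (hf : UD_morphism U D f)
  (hc : k_complete Q (image f (fun _ => True)) (Datatypes.S n)) :
  exists fs : st_A St -> Q,
    (UD_morphism (st_U St) (st_D St) fs /\ (forall p, fs (st_gamma St p) = f p)) /\
    forall g : st_A St -> Q,
      UD_morphism (st_U St) (st_D St) g -> (forall p, g (st_gamma St p) = f p) ->
      forall a, g a = fs a.
Proof.
  destruct (stage_extension P Q U D f hUr hDr hf n St hS hc) as (fs & hfs & hfs_f & _ & huniq).
  exists fs; split; [split; assumption |].
  intros g hg hgf; apply huniq; [| exact hgf].
  exact (UD_morphism_sub (fun Z hZ => proj1 hZ) (fun Z hZ => proj1 hZ) hg).
Qed.
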